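(* $\mathrm{TC}(\mathbb{S}^1_3)=3$.
   Context: Finite spaces are finite $T_0$ spaces identified with finite posets ($x^\downarrow=\{y:y\le x\}$ is the minimal open neighborhood of $x$; open sets are the down-closed sets). $\mathbb{S}^1_3=\{x_0,x_1,x_2,y_0,y_1,y_2\}$ has minimal open sets $x_i^\downarrow=\{x_i\}$ and $y_i^\downarrow=\{y_i,x_i,x_{i-1\bmod 3}\}$. Topological complexity is unreduced: for path-connected $X$, with $\pi:X^I\to X\times X$, $\gamma\mapsto(\gamma(0),\gamma(1))$ ($X^I$ with compact-open topology), $\mathrm{TC}(X)$ is the minimal $k$ such that $X\times X$ is covered by $k$ open sets each admitting a continuous section of $\pi$. *)

From Stdlib Require Import Reals Lra List.
Open Scope R_scope.

Record space := Space { pt :> Type; is_open : (pt -> Prop) -> Prop }.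

Inductive gen_open {T : Type} (B : (T -> Prop) -> Prop) : (T -> Prop) -> Prop :=
| gen_base U : B U -> gen_open B U
| gen_full : gen_open B (fun _ => True)
| gen_inter U V : gen_open B U -> gen_open B V -> gen_open B (fun x => U x /\ V x)
| gen_union (F : (T -> Prop) -> Prop) :
    (forall U, F U -> gen_open B U) -> gen_open B (fun x => exists U, F U /\ U x)
| gen_ext U V : gen_open B U -> (forall x, U x <-> V x) -> gen_open B V.

Definition continuous (X Y : space) (f : X -> Y) : Prop :=
  forall V, is_open Y V -> is_open X (fun x => V (f x)).

Definition subspace (X : space) (P : X -> Prop) : space :=
  Space {x : X | P x}
    (fun U => exists V, is_open X V /\ forall z : {x : X | P x}, U z <-> V (proj1_sig z)).

Definition prod_space (X Y : space) : space :=
  Space (X * Y)%type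
    (gen_open (fun W =>
       (exists U, is_open X U /\ W = (fun p : X * Y => U (fst p))) \/
       (exists V, is_open Y V /\ W = (fun p : X * Y => V (snd p))))).

Definition R_space : space :=
  Space R (fun U => forall x, U x -> exists eps, 0 < eps /\
                     forall y, Rabs (y - x) < eps -> U y).

Definition unit_interval : space := subspace R_space (fun t => 0 <= t <= 1).

Definition I0 : unit_interval.
Proof. exists 0. simpl. lra. Defined.
Definition I1 : unit_interval.
Proof. exists 1. simpl. lra. Defined.

Definition compact (X : space) (K : X -> Prop) : Prop :=
  forall F : (X -> Prop) -> Prop,
    (forall U, F U -> is_open X U) ->
    (forall x, K x -> exists U, F U /\ U x) ->
    exists l : list (X -> Prop),
      (forall U, In U l -> F U) /\ (forall x, K x -> exists U, In U l /\ U x).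

Definition path_space (X : space) : space :=
  Space {g : unit_interval -> X | continuous unit_interval X g}
    (gen_open (fun W => exists (K : unit_interval -> Prop) (U : X -> Prop),
        compact unit_interval K /\ is_open X U /\
        W = (fun g : {g : unit_interval -> X | continuous unit_interval X g} =>
               forall t, K t -> U (proj1_sig g t)))).

Definition endpoints (X : space) (g : path_space X) : prod_space X X :=
  (proj1_sig g I0, proj1_sig g I1).

Definition has_section (X : space) (W : prod_space X X -> Prop) : Prop :=
  exists s : subspace (prod_space X X) W -> path_space X,
    continuous (subspace (prod_space X X) W) (path_space X) s /\
    forall w, endpoints X (s w) = proj1_sig w.

Definition motion_cover (X : space) (k : nat) : Prop :=
  exists W : nat -> (prod_space X X -> Prop),
    (forall i, (i < k)%nat -> is_open (prod_space X X) (W i) /\ has_section X (W i)) /\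
    (forall p : prod_space X X, exists i, (i < k)%nat /\ W i p).

(** (Unreduced) topological complexity: TC(X) = k iff k is minimal. *)
Definition TC_eq (X : space) (k : nat) : Prop :=
  motion_cover X k /\ forall j, (j < k)%nat -> ~ motion_cover X j.

Inductive S13 : Type := x0 | x1 | x2 | y0 | y1 | y2.

(** [S13_le b a] : b <= a, i.e. b lies in the minimal open set a^down. *)
Definition S13_le (b a : S13) : Prop :=
  match a with
  | x0 => b = x0
  | x1 => b = x1
  | x2 => b = x2
  | y0 => b = y0 \/ b = x0 \/ b = x2
  | y1 => b = y1 \/ b = x1 \/ b = x0
  | y2 => b = y2 \/ b = x2 \/ b = x1
  end.

(** Open sets of a finite T0 space = down-closed sets. *)
Definition S13_space : space :=
  Space S13 (fun U => forall a b, S13_le b a -> U a -> U b).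

From Stdlib Require Import Reals List Lra Lia ZArith Bool.
From Stdlib Require Import Classical ClassicalEpsilon ProofIrrelevance.
Import ListNotations.
Open Scope R_scope.

(** The finite space S^1_3 is the Alexandrov space of its specialisation preorder, and
    the file first develops the needed facts for an arbitrary preorder [le]:
    - open sets of X x X are the down-closed sets of the product order;
    - a path [0,1] -> X is continuous iff it is "locally below itself", so zigzag
      ("fence") paths alternating between peaks and valleys are continuous;
    - a section of the endpoint map over a down-closed W is continuous iff it is
      monotone; hence if a down-closed U deforms monotonically onto a point
      (a <= f a >= c), then U x U carries the section a <= f a >= c <= f b >= b.
    Upper bound: the complement of each maximal point y_k deforms in this way onto the
    opposite minimal point, and the three squares of these complements cover X x X.
    Lower bound: a winding number for comparable-step loops in S^1_3 is invariant under
    pointwise comparable deformations; pushing a loop of pairs along a continuous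
    section (and using connectedness of [0,1]) shows that over a set with a section the
    two projections of a loop wind equally.  An exhaustive check shows that for every
    2-colouring of the 9 pairs of maximal points some monochromatic triple spans a
    hexagonal loop whose projections wind differently, so no 2 open sets suffice. *)

Definition near (t : unit_interval) (P : unit_interval -> Prop) : Prop :=
  exists eps, 0 < eps /\
    forall u : unit_interval, Rabs (proj1_sig u - proj1_sig t) < eps -> P u.

Lemma near_and t (P Q : unit_interval -> Prop) :
  near t P -> near t Q -> near t (fun u => P u /\ Q u).
Proof.
  intros [e1 [he1 H1]] [e2 [he2 H2]].
  exists (Rmin e1 e2); split; [now apply Rmin_glb_lt|].
  intros u hu; split; [apply H1 | apply H2].
  - eapply Rlt_le_trans; [exact hu | apply Rmin_l].
  - eapply Rlt_le_trans; [exact hu | apply Rmin_r].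
Qed.

Lemma near_forall t n (P : nat -> unit_interval -> Prop) :
  (forall i, (i <= n)%nat -> near t (P i)) ->
  near t (fun u => forall i, (i <= n)%nat -> P i u).
Proof.
  induction n as [|n IH]; intros HP.
  - destruct (HP 0%nat (le_n 0)) as [e [he H]].
    exists e; split; [exact he|]. intros u hu i hi.
    replace i with 0%nat by lia. now apply H.
  - destruct (near_and t _ _ (IH (fun i hi => HP i (le_S _ _ hi))) (HP (S n) (le_n _)))
      as [e [he H]].
    exists e; split; [exact he|]. intros u hu i hi.
    destruct (H u hu) as [Hle HS].
    destruct (Nat.eq_dec i (S n)) as [->|]; [exact HS | apply Hle; lia].
Qed.

Lemma unit_interval_ext (u v : unit_interval) : proj1_sig u = proj1_sig v -> u = v.
Proof. destruct u, v; simpl; intros ->; f_equal; apply proof_irrelevance. Qed.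

Lemma locally_constant_endpoints {A : Type} (F : unit_interval -> A) :
  (forall t, near t (fun u => F u = F t)) -> F I1 = F I0.
Proof.
  intros Hloc.
  set (E := fun x => 0 <= x <= 1 /\
                     forall u : unit_interval, proj1_sig u <= x -> F u = F I0).
  assert (E0 : E 0).
  { split; [lra|]. intros u hu. f_equal. apply unit_interval_ext.
    destruct u as [u hu']; simpl in *; lra. }
  destruct (completeness E) as [m [Hub Hlub]];
    [exists 1; intros x [h _]; lra | now exists 0 |].
  assert (hm : 0 <= m <= 1).
  { split; [now apply Hub | apply Hlub; intros x [h _]; lra]. }
  set (tm := exist (fun x => 0 <= x <= 1) m hm : unit_interval).
  destruct (Hloc tm) as [eps [heps Heps]].
  assert (Hx : exists x, E x /\ m - eps < x).
  { apply NNPP; intros hn.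
    assert (m <= m - eps); [|lra].
    apply Hlub; intros x Ex; apply Rnot_lt_le; intros h; apply hn; now exists x. }
  destruct Hx as [x [[hx HEx] hxm]].
  assert (hxm' : x <= m) by (apply Hub; now split).
  assert (Fm : F tm = F I0).
  { rewrite <- (HEx (exist _ x hx)) by (simpl; lra).
    symmetry; apply Heps; simpl; apply Rabs_def1; lra. }
  (* E then extends up to min(1, m + eps/2), so m = 1 *)
  assert (Ez : E (Rmin 1 (m + eps / 2))).
  { split; [split; [apply Rmin_glb; lra | apply Rmin_l]|].
    intros u hu. destruct (Rle_dec (proj1_sig u) x) as [h|h%Rnot_le_lt]; [now apply HEx|].
    rewrite <- Fm. apply Heps. pose proof (Rmin_r 1 (m + eps / 2)).
    destruct u as [u hu0]; simpl in *; apply Rabs_def1; lra. }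
  assert (m = 1) as Hm1.
  { pose proof (Hub _ Ez). unfold Rmin in *.
    destruct (Rle_dec 1 (m + eps / 2)); lra. }
  rewrite <- Fm. apply Heps. simpl. rewrite Hm1, Rminus_diag, Rabs_R0. exact heps.
Qed.

Section Alexandrov.

Variable T : Type.
Variable le : T -> T -> Prop.
Hypothesis le_refl : forall a, le a a.
Hypothesis le_trans : forall a b c, le a b -> le b c -> le a c.

Definition alexandrov : space := Space T (fun U => forall a b, le b a -> U a -> U b).

Local Notation X := alexandrov.
Local Notation XX := (prod_space alexandrov alexandrov).

Definition le2 (q p : T * T) : Prop := le (fst q) (fst p) /\ le (snd q) (snd p).

Definition down_closed2 (D : T * T -> Prop) : Prop :=
  forall p q, le2 q p -> D p -> D q.

Lemma prod_open_down_closed (V : T * T -> Prop) : is_open XX V -> down_closed2 V.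
Proof.
  simpl; induction 1 as [U [[U0 [HU ->]] | [U0 [HU ->]]] | | U V _ IHU _ IHV
                        | F _ IH | U V _ IHU HUV].
  - intros p q [h _]; exact (HU _ _ h).
  - intros p q [_ h]; exact (HU _ _ h).
  - intros p q _ _; exact I.
  - intros p q h [hU hV]; split; [exact (IHU p q h hU) | exact (IHV p q h hV)].
  - intros p q h [U [hF hU]]; exists U; split; [exact hF | exact (IH U hF p q h hU)].
  - intros p q h hV; apply HUV, (IHU p q h), HUV, hV.
Qed.

Lemma down_closed_prod_open (D : T * T -> Prop) : down_closed2 D -> is_open XX D.
Proof.
  intros HD; simpl.
  (* D is the union of the basic boxes (down p) x (down q) over its points (p, q) *)
  apply (gen_ext _ (fun z => exists U,
      (fun U => exists p, D p /\ U = (fun q => le2 q p)) U /\ U z)).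
  - apply gen_union; intros U [p [_ ->]].
    apply (gen_inter _ (fun q : T * T => le (fst q) (fst p))
                       (fun q : T * T => le (snd q) (snd p))); apply gen_base.
    + left; exists (fun a => le a (fst p)); split; [|reflexivity].
      intros a b hb ha; exact (le_trans _ _ _ hb ha).
    + right; exists (fun a => le a (snd p)); split; [|reflexivity].
      intros a b hb ha; exact (le_trans _ _ _ hb ha).
  - intros z; split.
    + intros [U [[p [Dp ->]] h]]; exact (HD p z h Dp).
    + intros Dz; exists (fun q => le2 q z); split; [now exists z|].
      split; apply le_refl.
Qed.

Definition locally_below (g : R -> T) : Prop :=
  forall r, exists eps, 0 < eps /\ forall r', Rabs (r' - r) < eps -> le (g r') (g r).

Lemma locally_below_continuous (g : R -> T) :
  locally_below g -> continuous unit_interval X (fun t => g (proj1_sig t)).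
Proof.
  intros Hg D HD; simpl in HD.
  exists (fun r => D (g r)); split; [|intros z; reflexivity].
  intros r Dr; destruct (Hg r) as [eps [he H]].
  exists eps; split; [exact he|]. intros r' hr'; exact (HD _ _ (H r' hr') Dr).
Qed.

Lemma continuous_near_below (gamma : unit_interval -> X) :
  continuous unit_interval X gamma ->
  forall t, near t (fun u => le (gamma u) (gamma t)).
Proof.
  intros Hc t.
  destruct (Hc (fun a => le a (gamma t))) as [V [HV HVe]].
  { intros a b hb ha; exact (le_trans _ _ _ hb ha). }
  destruct (HV (proj1_sig t)) as [eps [he H]]; [apply HVe, le_refl|].
  exists eps; split; [exact he|]. intros u hu; apply HVe, H, hu.
Qed.

Lemma locally_below_scale (g : R -> T) (c : R) :
  0 <= c -> locally_below g -> locally_below (fun r => g (c * r)).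
Proof.
  intros hc Hg r; destruct (Hg (c * r)) as [eps [he H]].
  exists (eps / (c + 1)); split; [apply Rdiv_lt_0_compat; lra|].
  intros r' hr'; apply H.
  replace (c * r' - c * r) with (c * (r' - r)) by ring.
  rewrite Rabs_mult, (Rabs_pos_eq c hc).
  apply Rle_lt_trans with ((c + 1) * Rabs (r' - r));
    [apply Rmult_le_compat_r; [apply Rabs_pos | lra]|].
  apply (Rmult_lt_compat_l (c + 1)) in hr'; [|lra].
  replace ((c + 1) * (eps / (c + 1))) with eps in hr' by (field; lra); exact hr'.
Qed.


(** Zigzag ("fence") maps: for [l = [(p_0,q_0); ...; (p_(n-1),q_(n-1))]] and a final
    value [z], [fence l z] takes the value [p_i] at the integer [i], the value [q_i]
    on the open interval [(i, i+1)], and [z] from [n] on. *)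
Fixpoint fence (l : list (T * T)) (z : T) (r : R) : T :=
  match l with
  | nil => z
  | (p, q) :: l' =>
      if Req_EM_T r 0 then p else if Rlt_dec r 1 then q else fence l' z (r - 1)
  end.

Definition fence_head (l : list (T * T)) (z : T) : T :=
  match l with nil => z | (p, _) :: _ => p end.

Fixpoint is_fence (l : list (T * T)) (z : T) : Prop :=
  match l with
  | nil => True
  | (p, q) :: l' => le q p /\ le q (fence_head l' z) /\ is_fence l' z
  end.

Lemma fence_0 l z : fence l z 0 = fence_head l z.
Proof. destruct l as [|[p q] l]; simpl; [reflexivity|]. now destruct (Req_EM_T 0 0). Qed.

Lemma fence_length l z : fence l z (INR (length l)) = z.
Proof.
  induction l as [|[p q] l IH]; [reflexivity|].
  cbn [length fence]; rewrite S_INR; pose proof (pos_INR (length l)).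
  destruct (Req_EM_T _ 0); [lra|]. destruct (Rlt_dec _ 1); [lra|].
  now replace (INR (length l) + 1 - 1) with (INR (length l)) by ring.
Qed.

Lemma fence_locally_below l z : is_fence l z -> locally_below (fence l z).
Proof.
  induction l as [|[p q] l IH]; intros Hl r.
  { exists 1; split; [lra|]; intros; apply le_refl. }
  destruct Hl as [hqp [hqh Hl]]; simpl.
  destruct (Req_EM_T r 0) as [->|hr0]; [|destruct (Rlt_dec r 1) as [hr1|hr1]].
  -
    exists 1; split; [lra|]; intros r' hr'; apply Rabs_def2 in hr'.
    destruct (Req_EM_T r' 0); [apply le_refl|].
    destruct (Rlt_dec r' 1); [exact hqp | lra].
  -
    exists (Rmin (Rabs r) (1 - r)); split.
    { apply Rmin_glb_lt; [now apply Rabs_pos_lt | lra]. }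
    intros r' hr'; apply Rabs_def2 in hr'.
    pose proof (Rmin_l (Rabs r) (1 - r)); pose proof (Rmin_r (Rabs r) (1 - r)).
    destruct (Req_EM_T r' 0) as [->|].
    { exfalso; destruct (Rle_dec 0 r); [rewrite Rabs_right in * | rewrite Rabs_left in *];
      lra. }
    destruct (Rlt_dec r' 1); [apply le_refl | lra].
  - destruct (IH Hl (r - 1)) as [e [he H]].
    destruct (Req_EM_T r 1) as [->|hr1'].
    +
      exists (Rmin e 1); split; [apply Rmin_glb_lt; lra|].
      intros r' hr'; apply Rabs_def2 in hr'.
      pose proof (Rmin_l e 1); pose proof (Rmin_r e 1).
      replace (1 - 1) with 0 by ring; rewrite fence_0.
      destruct (Req_EM_T r' 0); [lra|]. destruct (Rlt_dec r' 1); [exact hqh|].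
      rewrite <- fence_0; replace 0 with (1 - 1) by ring.
      apply H, Rabs_def1; lra.
    +
      exists (Rmin e (r - 1)); split; [apply Rmin_glb_lt; lra|].
      intros r' hr'; apply Rabs_def2 in hr'.
      pose proof (Rmin_l e (r - 1)); pose proof (Rmin_r e (r - 1)).
      destruct (Req_EM_T r' 0); [lra|]. destruct (Rlt_dec r' 1); [lra|].
      apply H, Rabs_def1; lra.
Qed.

Lemma fence_monotone l l' z z' r :
  Forall2 le2 l l' -> le z z' -> le (fence l z r) (fence l' z' r).
Proof.
  intros Hl hz; revert r; induction Hl as [|[p q] [p' q'] l l' [hp hq] _ IH];
    intros r; simpl; [exact hz|].
  destruct (Req_EM_T r 0); [exact hp|]. destruct (Rlt_dec r 1); [exact hq | apply IH].
Qed.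

Definition fence_path (l : list (T * T)) (z : T) (t : unit_interval) : T :=
  fence l z (INR (length l) * proj1_sig t).

Lemma fence_path_continuous l z : is_fence l z -> continuous unit_interval X (fence_path l z).
Proof.
  intros Hl; apply (locally_below_continuous (fun r => fence l z (INR (length l) * r))).
  apply locally_below_scale; [apply pos_INR | now apply fence_locally_below].
Qed.

Lemma fence_path_0 l z : fence_path l z I0 = fence_head l z.
Proof. unfold fence_path; simpl; rewrite Rmult_0_r; apply fence_0. Qed.

Lemma fence_path_1 l z : fence_path l z I1 = z.
Proof. unfold fence_path; simpl; rewrite Rmult_1_r; apply fence_length. Qed.

Definition monotone_section (W : T * T -> Prop) (s : subspace XX W -> path_space X) : Prop :=
  forall w w' : subspace XX W, le2 (proj1_sig w') (proj1_sig w) ->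
    forall t, le (proj1_sig (s w') t) (proj1_sig (s w) t).

Lemma monotone_section_continuous W s :
  down_closed2 W -> monotone_section W s ->
  continuous (subspace XX W) (path_space X) s.
Proof.
  intros HW Hs V HV.
  (* open sets of paths are down-closed for the pointwise order, hence so are their
     preimages under the monotone [s] *)
  assert (HVd : forall w w' : subspace XX W,
             le2 (proj1_sig w') (proj1_sig w) -> V (s w) -> V (s w')).
  { simpl in HV; induction HV as [U [K [U1 [_ [HU1 ->]]]] | | U U' _ IH _ IH'
                                 | F _ IH | U U' _ IH HUU'].
    - intros w w' h hU t Kt; exact (HU1 _ _ (Hs w w' h t) (hU t Kt)).
    - intros; exact I.
    - intros w w' h [hU hU']; split; [exact (IH w w' h hU) | exact (IH' w w' h hU')].
    - intros w w' h [U [hF hU]]; exists U; split; [exact hF | exact (IH U hF w w' h hU)].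
    - intros w w' h hU; apply HUU', (IH w w' h), HUU', hU. }
  exists (fun p => exists h : W p, V (s (exist _ p h))); split.
  - apply down_closed_prod_open; intros p q hqp [h Vp].
    exists (HW p q hqp h); exact (HVd (exist _ p h) (exist _ q _) hqp Vp).
  - intros [p h]; simpl; split; [now exists h|].
    intros [h' Vp]; exact (HVd (exist _ p h') (exist _ p h) (conj (le_refl _) (le_refl _)) Vp).
Qed.

(** Conversely every continuous section is monotone (test against the open set of paths
    lying below a given path at a single time [t]). *)
Lemma continuous_section_monotone W s :
  continuous (subspace XX W) (path_space X) s -> monotone_section W s.
Proof.
  intros Hc w w' hw t.
  set (z := proj1_sig (s w) t).
  set (O := fun g : path_space X =>
              forall u, (fun u => u = t) u -> (fun a => le a z) (proj1_sig g u)).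
  assert (HO : is_open (path_space X) O).
  { apply gen_base; exists (fun u => u = t), (fun a => le a z).
    split; [|split; [|reflexivity]].
    - intros F _ Hcov; destruct (Hcov t eq_refl) as [U [hU hUt]].
      exists [U]; split; [intros U' [<-|[]]; exact hU|].
      intros u ->; exists U; split; [left|]; auto.
    - intros a b hb ha; exact (le_trans _ _ _ hb ha). }
  destruct (Hc O HO) as [V [HV HVe]].
  assert (Vw : V (proj1_sig w)) by (apply HVe; intros u ->; apply le_refl).
  apply (HVe w'); [|reflexivity].
  exact (prod_open_down_closed V HV _ _ hw Vw).
Qed.

(** If the down-closed set [U] deforms, through a monotone [f] with [a <= f a >= c],
    onto a point [c], then [U x U] admits a continuous section: the fence path
    [a <= f a >= c <= f b >= b]. *)
Lemma square_section (U : T -> Prop) (c : T) (f : T -> T) :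
  (forall a b, le b a -> U a -> U b) ->
  (forall a, U a -> le a (f a) /\ le c (f a)) ->
  (forall a b, U a -> le b a -> le (f b) (f a)) ->
  has_section X (fun p => U (fst p) /\ U (snd p)).
Proof.
  intros HU Hf Hmono.
  set (W := fun p : T * T => U (fst p) /\ U (snd p)).
  set (legs := fun p : T * T => [(fst p, fst p); (f (fst p), c); (f (snd p), snd p)]).
  assert (Hcont : forall w : subspace XX W,
             continuous unit_interval X (fence_path (legs (proj1_sig w)) (snd (proj1_sig w)))).
  { intros [[a b] [ha hb]]; apply fence_path_continuous; simpl.
    destruct (Hf a ha), (Hf b hb); repeat split; auto. }
  exists (fun w => exist _ _ (Hcont w)); split.
  - apply monotone_section_continuous.
    + intros p q [h1 h2] [hp1 hp2]; split; [exact (HU _ _ h1 hp1) | exact (HU _ _ h2 hp2)].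
    + intros [[a b] [ha hb]] [[a' b'] hw'] [h1 h2] t; simpl in *.
      apply fence_monotone; [|exact h2].
      repeat constructor; simpl; auto.
  - intros [[a b] hw]; unfold endpoints; simpl.
    now rewrite fence_path_0, fence_path_1.
Qed.

End Alexandrov.

(** The specialisation order of S^1_3 as a boolean test; [S13_space] is by definition
    [alexandrov S13 S13_le], so the general facts above apply to it. *)
Definition S13_leb (b a : S13) : bool :=
  match a, b with
  | x0, x0 | x1, x1 | x2, x2 => true
  | y0, (y0 | x0 | x2) | y1, (y1 | x1 | x0) | y2, (y2 | x2 | x1) => true
  | _, _ => false
  end.

Lemma S13_le_leb b a : S13_le b a <-> S13_leb b a = true.
Proof. destruct a, b; simpl; intuition congruence. Qed.

Lemma S13_le_refl a : S13_le a a.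
Proof. apply S13_le_leb; now destruct a. Qed.

Lemma S13_le_trans a b c : S13_le a b -> S13_le b c -> S13_le a c.
Proof. rewrite !S13_le_leb; destruct a, b, c; simpl; congruence. Qed.

Definition peak (k : nat) : S13 := match k with 0 => y0 | 1 => y1 | _ => y2 end%nat.
Definition antipode (k : nat) : S13 := match k with 0 => x1 | 1 => x2 | _ => x0 end%nat.

(** [push k] moves every point other than [peak k] up to a maximal point lying above
    [antipode k]: it contracts the complement of [peak k] inside the space. *)
Definition push (k : nat) (a : S13) : S13 :=
  match k, a with
  | 0, x0 => y1 | 0, x2 => y2
  | 1, x1 => y2 | 1, x0 => y0
  | S (S _), x2 => y0 | S (S _), x1 => y1
  | _, _ => a
  end%nat.

(** Maximal points are up-closed, so their complements are open. *)
Lemma avoid_peak_down k a b : S13_le b a -> a <> peak k -> b <> peak k.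
Proof.
  rewrite S13_le_leb; intros h ha ->; destruct k as [|[|k]], a; simpl in *; congruence.
Qed.

Lemma push_above k a : a <> peak k -> S13_le a (push k a) /\ S13_le (antipode k) (push k a).
Proof. rewrite !S13_le_leb; destruct k as [|[|k]], a; simpl; intuition congruence. Qed.

Lemma push_monotone k a b : a <> peak k -> S13_le b a -> S13_le (push k b) (push k a).
Proof. rewrite !S13_le_leb; destruct k as [|[|k]], a, b; simpl; congruence. Qed.

Definition avoid (k : nat) (p : S13 * S13) : Prop := fst p <> peak k /\ snd p <> peak k.

Lemma avoid_cover p : exists k, (k < 3)%nat /\ avoid k p.
Proof.
  destruct p as [a b]; unfold avoid; simpl.
  destruct a, b;
    first [ exists 0%nat; split; [lia | simpl; split; discriminate]
          | exists 1%nat; split; [lia | simpl; split; discriminate]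
          | exists 2%nat; split; [lia | simpl; split; discriminate] ].
Qed.

Lemma cover3 : motion_cover S13_space 3.
Proof.
  exists avoid; split; [|exact avoid_cover].
  intros k _; split.
  - apply down_closed_prod_open; [exact S13_le_refl | exact S13_le_trans |].
    intros p q [h1 h2] [hp1 hp2]; split; eapply avoid_peak_down; eauto.
  - apply (square_section S13 S13_le S13_le_refl S13_le_trans
             (fun a => a <> peak k) (antipode k) (push k)).
    + intros a b; apply avoid_peak_down.
    + apply push_above.
    + intros a b ha; apply push_monotone, ha.
Qed.

(** Going around the circle the points come in the cyclic order
    x0, y0, x2, y2, x1, y1; [step a b] is +1, -1 or 0 according as [b] is the next,
    the previous, or neither neighbour of [a] in this order. *)
Definition position (a : S13) : Z :=
  match a with x0 => 0 | y0 => 1 | x2 => 2 | y2 => 3 | x1 => 4 | y1 => 5 end%Z.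

Definition step (a b : S13) : Z :=
  let d := ((position b - position a) mod 6)%Z in
  if Z.eqb d 1 then 1%Z else if Z.eqb d 5 then (-1)%Z else 0%Z.

Definition comparable (a b : S13) : Prop := S13_le a b \/ S13_le b a.

Lemma step_square a b a' b' :
  S13_le a a' -> S13_le b b' -> comparable a b -> comparable a' b' ->
  (step a b + step b b' = step a a' + step a' b')%Z.
Proof.
  unfold comparable; rewrite !S13_le_leb.
  destruct a, b, a', b'; simpl; intuition discriminate.
Qed.

Fixpoint walk (v : nat -> S13) (n : nat) : Z :=
  match n with 0 => 0%Z | S k => (walk v k + step (v k) (v (S k)))%Z end.

Lemma walk_ext v v' n : (forall i, v i = v' i) -> walk v n = walk v' n.
Proof. intros H; induction n as [|n IH]; simpl; [reflexivity|]; now rewrite IH, !H. Qed.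

Lemma walk_homotopy v v' n :
  (forall i, (i <= n)%nat -> S13_le (v i) (v' i)) ->
  (forall i, (i < n)%nat -> comparable (v i) (v (S i))) ->
  (forall i, (i < n)%nat -> comparable (v' i) (v' (S i))) ->
  (walk v n + step (v n) (v' n) = step (v 0%nat) (v' 0%nat) + walk v' n)%Z.
Proof.
  intros Hle Hv Hv'; induction n as [|n IH]; simpl; [lia|].
  pose proof (step_square (v n) (v (S n)) (v' n) (v' (S n))
                (Hle n (le_S _ _ (le_n n))) (Hle (S n) (le_n _))
                (Hv n (le_n _)) (Hv' n (le_n _))).
  enough (walk v n + step (v n) (v' n) = step (v 0%nat) (v' 0%nat) + walk v' n)%Z by lia.
  apply IH; intros; [apply Hle | apply Hv | apply Hv']; lia.
Qed.

Lemma walk_loop_invariant v v' n :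
  (forall i, (i <= n)%nat -> S13_le (v i) (v' i)) ->
  (forall i, (i < n)%nat -> comparable (v i) (v (S i))) ->
  (forall i, (i < n)%nat -> comparable (v' i) (v' (S i))) ->
  v n = v 0%nat -> v' n = v' 0%nat -> walk v n = walk v' n.
Proof.
  intros Hle Hv Hv' hv hv'.
  pose proof (walk_homotopy v v' n Hle Hv Hv'); rewrite hv, hv' in *; lia.
Qed.

Local Notation XX := (prod_space S13_space S13_space).

Definition comparable2 (p q : S13 * S13) : Prop := le2 S13 S13_le p q \/ le2 S13 S13_le q p.

(** Indeed the section
    moves the loop of start points to the loop of end points through loops whose
    winding is locally constant in time. *)
Lemma section_preserves_winding (W : S13 * S13 -> Prop) (h : nat -> S13 * S13) (n : nat) :
  has_section S13_space W ->
  (forall i, W (h i)) ->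
  (forall i, (i < n)%nat -> comparable2 (h i) (h (S i))) ->
  h n = h 0%nat ->
  walk (fun i => fst (h i)) n = walk (fun i => snd (h i)) n.
Proof.
  intros [s [Hc Hend]] HW Hstep Hclosed.
  set (w := fun i => exist W (h i) (HW i) : subspace XX W).
  set (val := fun (t : unit_interval) i => proj1_sig (s (w i)) t).
  assert (Hmono := continuous_section_monotone S13 S13_le S13_le_refl S13_le_trans W s Hc).
  assert (Hwn : w n = w 0%nat).
  { unfold w; generalize (HW n); rewrite Hclosed; intros; f_equal; apply proof_irrelevance. }
  assert (Hfence : forall t i, (i < n)%nat -> comparable (val t i) (val t (S i))).
  { intros t i hi; destruct (Hstep i hi); [left | right]; now apply Hmono. }
  assert (Hloc : forall t, near t (fun u => walk (val u) n = walk (val t) n)).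
  { intros t.
    destruct (near_forall t n (fun i u => S13_le (val u i) (val t i))) as [e [he H]].
    { intros i _; apply (continuous_near_below S13 S13_le S13_le_refl S13_le_trans),
        (proj2_sig (s (w i))). }
    exists e; split; [exact he|]; intros u hu.
    apply walk_loop_invariant; auto; unfold val; now rewrite Hwn. }
  assert (H0 : forall i, val I0 i = fst (h i)).
  { intros i; change (fst (endpoints S13_space (s (w i))) = fst (proj1_sig (w i))).
    now rewrite Hend. }
  assert (H1 : forall i, val I1 i = snd (h i)).
  { intros i; change (snd (endpoints S13_space (s (w i))) = snd (proj1_sig (w i))).
    now rewrite Hend. }
  rewrite <- (walk_ext _ _ n H0), <- (walk_ext _ _ n H1).
  symmetry; exact (locally_constant_endpoints (fun t => walk (val t) n) Hloc).
Qed.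

Definition meet (a b : S13) : S13 :=
  match a, b with
  | y0, y1 | y1, y0 => x0
  | y1, y2 | y2, y1 => x1
  | y0, y2 | y2, y0 => x2
  | _, _ => a
  end.

Definition peaks : list S13 := [y0; y1; y2].

Lemma meet_below a b :
  In a peaks -> In b peaks -> S13_le (meet a b) a /\ S13_le (meet a b) b.
Proof. rewrite !S13_le_leb; simpl; intros ha hb; intuition subst; reflexivity. Qed.

Definition meet2 (p q : S13 * S13) : S13 * S13 := (meet (fst p) (fst q), meet (snd p) (snd q)).

Definition hexagon (p q r : S13 * S13) (i : nat) : S13 * S13 :=
  match i with
  | 1 => meet2 p q | 2 => q | 3 => meet2 q r | 4 => r | 5 => meet2 r p | _ => p
  end%nat.

Definition separating (p q r : S13 * S13) : bool :=
  negb (Z.eqb (walk (fun i => fst (hexagon p q r i)) 6)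
              (walk (fun i => snd (hexagon p q r i)) 6)).

Definition peak_pairs : list (S13 * S13) := list_prod peaks peaks.

Lemma monochromatic_separating_hexagon (col : S13 * S13 -> bool) :
  exists p q r, In p peak_pairs /\ In q peak_pairs /\ In r peak_pairs /\
    col q = col p /\ col r = col p /\ separating p q r = true.
Proof.
  assert (Hsearch : existsb (fun p => existsb (fun q => existsb (fun r =>
      separating p q r && Bool.eqb (col q) (col p) && Bool.eqb (col r) (col p))
      peak_pairs) peak_pairs) peak_pairs = true).
  { cbv.
    destruct (col (y0, y0)), (col (y0, y1)), (col (y0, y2)), (col (y1, y0)), (col (y1, y1)),
      (col (y1, y2)), (col (y2, y0)), (col (y2, y1)), (col (y2, y2)); reflexivity. }
  apply existsb_exists in Hsearch as [p [hp Hsearch]].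
  apply existsb_exists in Hsearch as [q [hq Hsearch]].
  apply existsb_exists in Hsearch as [r [hr Hsearch]].
  rewrite !andb_true_iff in Hsearch; destruct Hsearch as [[hsep hq'] hr'].
  exists p, q, r; repeat split; auto; now apply eqb_prop.
Qed.

Lemma meet2_below p q : In p peak_pairs -> In q peak_pairs ->
  le2 S13 S13_le (meet2 p q) p /\ le2 S13 S13_le (meet2 p q) q.
Proof.
  destruct p as [a b], q as [a' b']; unfold peak_pairs; rewrite !in_prod_iff.
  intros [ha hb] [ha' hb'].
  destruct (meet_below a a' ha ha'), (meet_below b b' hb hb'); split; split; assumption.
Qed.

Lemma hexagon_steps p q r : In p peak_pairs -> In q peak_pairs -> In r peak_pairs ->
  forall i, (i < 6)%nat -> comparable2 (hexagon p q r i) (hexagon p q r (S i)).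
Proof.
  intros hp hq hr i hi.
  destruct (meet2_below p q hp hq), (meet2_below q r hq hr), (meet2_below r p hr hp).
  unfold comparable2; destruct i as [|[|[|[|[|[|i]]]]]]; simpl; auto; lia.
Qed.

Lemma hexagon_in (W : S13 * S13 -> Prop) p q r :
  down_closed2 S13 S13_le W -> In p peak_pairs -> In q peak_pairs -> In r peak_pairs ->
  W p -> W q -> W r -> forall i, W (hexagon p q r i).
Proof.
  intros HW hp hq hr wp wq wr i.
  destruct (meet2_below p q hp hq), (meet2_below q r hq hr), (meet2_below r p hr hp).
  destruct i as [|[|[|[|[|[|i]]]]]]; simpl; eauto.
Qed.

(** Colour the peak
    pairs by the open set containing them; a separating monochromatic hexagon then
    lies in a single open set, contradicting [section_preserves_winding]. *)
Lemma no_motion_cover2 : ~ motion_cover S13_space 2.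
Proof.
  intros [W [Hop Hcov]].
  set (col := fun p => if excluded_middle_informative (W 0%nat p) then true else false).
  assert (Hcol : forall p, W (if col p then 0 else 1)%nat p).
  { intros p; unfold col; destruct (excluded_middle_informative (W 0%nat p)) as [h|h];
      [exact h|].
    destruct (Hcov p) as [[|[|i]] [hi Hi]]; [contradiction | exact Hi | lia]. }
  destruct (monochromatic_separating_hexagon col) as [p [q [r [hp [hq [hr [cq [cr hsep]]]]]]]].
  set (k := (if col p then 0 else 1)%nat).
  assert (Hk : (k < 2)%nat) by (unfold k; destruct (col p); lia).
  destruct (Hop k Hk) as [Hopen Hsec].
  assert (Hhex : forall i, W k (hexagon p q r i)).
  { apply hexagon_in; auto.
    - exact (prod_open_down_closed S13 S13_le (W k) Hopen).
    - apply Hcol.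
    - unfold k; rewrite <- cq; apply Hcol.
    - unfold k; rewrite <- cr; apply Hcol. }
  pose proof (section_preserves_winding (W k) (hexagon p q r) 6 Hsec Hhex
                (hexagon_steps p q r hp hq hr) eq_refl) as Heq.
  unfold separating in hsep; rewrite Heq, Z.eqb_refl in hsep; discriminate.
Qed.

Lemma motion_cover_weaken (X : space) (j k : nat) :
  motion_cover X j -> (0 < j <= k)%nat -> motion_cover X k.
Proof.
  intros [W [HW Hcov]] hjk.
  exists (fun i => if lt_dec i j then W i else W 0%nat); split.
  - intros i _; destruct (lt_dec i j); apply HW; lia.
  - intros z; destruct (Hcov z) as [i [hi Hi]]; exists i; split; [lia|].
    now destruct (lt_dec i j).
Qed.

Theorem corollary6 : TC_eq S13_space 3.
Proof.
  split; [exact cover3|].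
  intros [|j] hj Hcov.
  - destruct Hcov as [W [_ Hcov]]; destruct (Hcov (x0, x0)) as [i [hi _]]; lia.
  - apply no_motion_cover2, (motion_cover_weaken _ (S j)); [exact Hcov | lia].
Qed.
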